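(* Let $G$ be a graph, let $D$ be a minimum dominating set of $G$ and $\gamma=|D|$, and let $\nabla$ be an integer with $\nabla>\nabla_1^B(G)$. Let $$\hat D=\{v\in V(G): \text{for all } A\subseteq D\setminus\{v\} \text{ with } N(v)\subseteq N[A] \text{ we have } |A|>2\nabla-1\}$$ and $$D_1=\{v\in V(G): \text{for all } A\subseteq V(G)\setminus\{v\} \text{ with } N(v)\subseteq N[A] \text{ we have } |A|>2\nabla-1\}.$$ Then $D_1\subseteq\hat D$ and $|D_1\setminus D|\le\rho(G)\cdot\gamma$.
   Context: Graphs are finite, undirected and simple. $N(v)$ is the open neighbourhood of $v$, $N[v]=N(v)\cup\{v\}$, and $N[A]=\bigcup_{a\in A}N[a]$. A dominating set is a set $D$ with $N[D]=V(G)$. A graph $H$ is a $1$-shallow minor of $G$ if it is obtained from $G$ by deleting vertices and edges and contracting pairwise vertex-disjoint connected subgraphs of radius at most $1$. $\nabla_1^B(G)$ is the maximum of $|E(H)|/|V(H)|$ over all bipartite $1$-shallow minors $H$ of $G$. The Hall ratio $\rho(G)$ is $\max\{|V(H)|/\alpha(H): H\subseteq G\}$, where $\alpha(H)$ is the size of a largest independent set of $H$. *)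

From HB Require Import structures.
From mathcomp Require Import all_boot all_order all_algebra.
Set Implicit Arguments. Unset Strict Implicit. Unset Printing Implicit Defensive.
Import Order.TTheory GRing.Theory Num.Theory.

Section Graphs.
Variable T : finType.
Variable e : rel T.

Definition simple_graph := symmetric e /\ irreflexive e.

Definition Nopen (v : T) : {set T} := [set u | e v u].
Definition Nclosed (v : T) : {set T} := v |: Nopen v.
Definition NclosedS (A : {set T}) : {set T} := \bigcup_(a in A) Nclosed a.

Definition dominating (D : {set T}) : bool := NclosedS D == [set: T].

Definition min_dominating (D : {set T}) : Prop :=
  dominating D /\ forall D' : {set T}, dominating D' -> #|D| <= #|D'|.

(* H is a bipartite 1-shallow minor of G with vertex set 'I_k:
   branch sets B i (pairwise disjoint), each the vertex set of a connected
   subgraph of radius <= 1 with centre c i (i.e. B i \subset N[c i]);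
   edge relation F of H is symmetric, irreflexive, only joins branch sets
   that are joined by an edge of G, and H is 2-colourable. *)
Definition bip_1shallow_minor (k : nat) (B : 'I_k -> {set T}) (c : 'I_k -> T)
    (F : rel 'I_k) : Prop :=
  [/\ forall i, c i \in B i /\ B i \subset Nclosed (c i),
      forall i j, i != j -> [disjoint B i & B j],
      symmetric F /\ irreflexive F,
      forall i j, F i j -> exists x, exists y,
          [/\ x \in B i, y \in B j & e x y]
    & exists col : 'I_k -> bool, forall i j, F i j -> col i != col j].

Definition num_edges (k : nat) (F : rel 'I_k) : nat :=
  #|[set p : 'I_k * 'I_k | F p.1 p.2 && (p.1 < p.2)%N]|.

(* nabla1B_lt x  <->  nabla_1^B(G) < x, i.e. every (nonempty) bipartite
   1-shallow minor H of G satisfies |E(H)|/|V(H)| < x. *)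
Definition nabla1B_lt (x : rat) : Prop :=
  forall (k : nat) (B : 'I_k -> {set T}) (c : 'I_k -> T) (F : rel 'I_k),
    bip_1shallow_minor B c F -> (0 < k)%N ->
    ((num_edges F)%:R / k%:R < x)%R.

Definition alpha_sub (S : {set T}) (F : {set T * T}) : nat :=
  \max_(I : {set T} | (I \subset S) &&
        [forall x in I, forall y in I, (x, y) \notin F]) #|I|.

Definition subgraph_edges (S : {set T}) (F : {set T * T}) : bool :=
  [forall p in F, [&& p.1 \in S, p.2 \in S & e p.1 p.2]].

Definition hall_ratio : rat :=
  \big[Num.max/0%R]_(S : {set T} | S != set0)
    \big[Num.max/0%R]_(F : {set T * T} | subgraph_edges S F)
      ((#|S|%:R : rat) / (alpha_sub S F)%:R)%R.

Definition Dhat (D : {set T}) (nabla : int) : {set T} :=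
  [set v | [forall A : {set T},
     ((A \subset D :\ v) && (Nopen v \subset NclosedS A)) ==>
     (2 * nabla - 1 < (#|A|)%:Z)%R]].

Definition D1 (nabla : int) : {set T} :=
  [set v | [forall A : {set T},
     ((A \subset [set: T] :\ v) && (Nopen v \subset NclosedS A)) ==>
     (2 * nabla - 1 < (#|A|)%:Z)%R]].

End Graphs.

From HB Require Import structures.
From mathcomp Require Import all_boot all_order all_algebra.
From mathcomp Require Import zify.
Import Order.TTheory GRing.Theory Num.Theory.
Set Implicit Arguments. Unset Strict Implicit.

(* D1 is contained in Dhat because Dhat quantifies over fewer sets A. For the
   bound, let S = D1 \ D; then |S| <= rho(G) alpha(G[S]), so it suffices that
   every independent set I of S has |I| <= |D|. Keep the vertices of I as
   singletons and put every vertex outside I and D into the branch set of a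
   neighbour in D dominating it: this is a bipartite 1-shallow minor H with
   sides I and D. The H-neighbourhood A of v in I satisfies N(v) <= N[A], so
   v in D1 forces deg_H v >= 2 nabla. Hence 2 nabla |I| <= |E(H)| <
   nabla (|I| + |D|), and nabla > 0, so |I| < |D|. *)

Lemma card_set_enum_val (T : finType) (A : {set T}) (P : pred T) :
  #|[set i : 'I_#|A| | P (enum_val i)]| = #|[set x in A | P x]|.
Proof.
rewrite -(card_imset _ enum_val_inj); apply: eq_card => x; rewrite inE.
apply/imsetP/andP => [[i] | [xA Px]].
  by rewrite inE => Pi ->; rewrite enum_valP.
by exists (enum_rank_in xA x); rewrite ?inE enum_rankK_in.
Qed.

Lemma sum_card_lshift_rshift_le m n (F : rel 'I_(m + n)) :
  \sum_(a < m) #|[set b : 'I_n | F (lshift n a) (rshift m b)]| <= num_edges F.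
Proof.
rewrite (eq_bigr _ (fun a _ => esym (sum1dep_card _))) pair_big_dep /=.
rewrite sum1dep_card /num_edges.
have lr_inj : injective (fun p : 'I_m * 'I_n => (lshift n p.1, rshift m p.2)).
  move=> [a b] [a' b'] [ea eb]; congr pair; apply: val_inj => //.
  exact: addnI eb.
rewrite -(card_imset _ lr_inj).
apply/subset_leq_card/subsetP => q /imsetP[[a b]].
by rewrite !inE /= => Fab ->; rewrite Fab /= ltn_addr.
Qed.

Lemma nabla1B_lt_gt0 (T : finType) (e : rel T) (x : rat) (v0 : T) :
  nabla1B_lt e x -> (0 < x)%R.
Proof.
move=> /(_ 1 (fun=> [set v0]) (fun=> v0) (fun _ _ => false)).
have -> : num_edges (fun _ _ : 'I_1 => false) = 0.
  by apply/eqP; rewrite cards_eq0; apply/eqP/setP => p; rewrite !inE.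
rewrite mul0r; apply=> //; split=> //.
- by move=> i; rewrite set11 sub1set setU11.
- by move=> i j; rewrite !ord1 eqxx.
- by exists (fun=> true).
Qed.

Section BipartiteMinor.

Variables (T : finType) (e : rel T) (D I : {set T}).
Hypotheses (e_sym : symmetric e) (domD : dominating e D)
  (disjID : [disjoint I & D]).

Definition dominator (u : T) : T := odflt u [pick d in D | u \in Nclosed e d].

Lemma dominator_dominates u :
  u \notin D -> dominator u \in D /\ e (dominator u) u.
Proof.
move=> uD; rewrite /dominator; case: pickP => [d /andP[dD] | noD] /=.
  by rewrite !inE => /predU1P[ud | //]; rewrite ud dD in uD.
move/eqP/setP: domD => /(_ u); rewrite inE => /bigcupP[d dD ud].
by have := noD d; rewrite dD ud.
Qed.

Definition branch (x : T) : {set T} :=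
  x |: [set u | [&& u \notin D, u \notin I & dominator u == x]].

Lemma branch_center x : x \in branch x.
Proof. exact: setU11. Qed.

Lemma branch_sub_Nclosed x : branch x \subset Nclosed e x.
Proof.
apply/subsetP => u; rewrite !inE => /predU1P[-> | /and3P[uD _ /eqP <-]].
  by rewrite eqxx.
by rewrite (dominator_dominates uD).2 orbT.
Qed.

Lemma branch_disjoint x y : x \in I :|: D -> y \in I :|: D -> x != y ->
  [disjoint branch x & branch y].
Proof.
move=> xID yID xy; rewrite -setI_eq0; apply/eqP/setP => z; rewrite !inE.
apply/negP => /andP[/predU1P[zx | /and3P[zD zI /eqP zx]]
                    /predU1P[zy | /and3P[zD' zI' /eqP zy]]].
- by rewrite -zx -zy eqxx in xy.
- by move: xID; rewrite -zx inE (negPf zD') (negPf zI').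
- by move: yID; rewrite -zy inE (negPf zD) (negPf zI).
- by rewrite -zx -zy eqxx in xy.
Qed.

Definition cross (x y : T) : bool :=
  ((x \in I) != (y \in I)) &&
  [exists a in branch x, exists b in branch y, e a b].

Lemma cross_sym : symmetric cross.
Proof.
move=> x y; rewrite /cross eq_sym; congr andb.
apply/existsP/existsP => -[a /andP[ax /existsP[b /andP[yb eab]]]];
  by exists b; rewrite yb; apply/existsP; exists a; rewrite ax e_sym.
Qed.

(* The vertices of H: first those of I, then those of D, so that each edge of H
   is counted once in [num_edges] as a pair (lshift a, rshift b). *)
Definition vtx (i : 'I_(#|I| + #|D|)) : T :=
  match split i with inl a => enum_val a | inr b => enum_val b end.

Lemma vtx_lshift a : vtx (lshift #|D| a) = enum_val a.
Proof. by rewrite /vtx -[lshift _ a]/(unsplit (inl a)) unsplitK. Qed.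

Lemma vtx_rshift b : vtx (rshift #|I| b) = enum_val b.
Proof. by rewrite /vtx -[rshift _ b]/(unsplit (inr b)) unsplitK. Qed.

Lemma vtx_in i : vtx i \in I :|: D.
Proof. by rewrite /vtx inE; case: (split i) => a; rewrite enum_valP ?orbT. Qed.

Lemma vtx_inj : injective vtx.
Proof.
have notID (a : 'I_#|I|) (b : 'I_#|D|) : enum_val a != enum_val b :> T.
  apply: contraTneq (enum_valP a) => ->.
  by rewrite (disjointFl disjID) ?enum_valP.
move=> i j eq_ij; rewrite -[i]splitK -[j]splitK; congr unsplit; move: eq_ij.
rewrite /vtx; case: (split i) (split j) => [a|b] [a'|b'] eq_ij.
- by rewrite (enum_val_inj eq_ij).
- by move: (notID a b'); rewrite eq_ij eqxx.
- by move: (notID a' b); rewrite eq_ij eqxx.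
- by rewrite (enum_val_inj eq_ij).
Qed.

Lemma bip_1shallow_minor_cross :
  bip_1shallow_minor e (fun i => branch (vtx i)) vtx
    (fun i j => cross (vtx i) (vtx j)).
Proof.
split.
- by move=> i; split; [apply: branch_center | apply: branch_sub_Nclosed].
- by move=> i j ij; apply: branch_disjoint; rewrite ?vtx_in ?(inj_eq vtx_inj).
- by split=> [i j | i]; [exact: cross_sym | rewrite /cross eqxx].
- move=> i j /andP[_ /existsP[a /andP[ai /existsP[b /andP[bj eab]]]]].
  by exists a, b.
- by exists (fun i => vtx i \in I) => i j /andP[].
Qed.

Hypothesis indepI : {in I &, forall x y, ~~ e x y}.

Lemma Nopen_sub_NclosedS_cross v : v \in I ->
  Nopen e v \subset NclosedS e [set d in D | cross v d].
Proof.
have notID x : x \in D -> x \notin I by move=> xD; rewrite (disjointFl disjID).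
move=> vI; apply/subsetP => u; rewrite inE => evu; apply/bigcupP.
have cross_v d : d \in D -> u \in branch d -> cross v d.
  move=> dD ud; rewrite /cross vI notID //; apply/existsP; exists v.
  by rewrite branch_center; apply/existsP; exists u; rewrite ud.
have [uD | uD] := boolP (u \in D).
  exists u; last by rewrite /Nclosed setU11.
  by rewrite inE uD cross_v ?branch_center.
have [dD edu] := dominator_dominates uD.
have uI : u \notin I by apply: contraL evu; exact: indepI vI.
exists (dominator u); last by rewrite !inE edu orbT.
by rewrite inE dD cross_v // !inE uD uI eqxx orbT.
Qed.

End BipartiteMinor.

Lemma D1_sub_Dhat (T : finType) (e : rel T) (D : {set T}) (nabla : int) :
  D1 e nabla \subset Dhat e D nabla.
Proof.
apply/subsetP => v; rewrite !inE => /forallP D1v; apply/forallP => A.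
apply/implyP => /andP[AD NvA]; apply: (implyP (D1v A)); rewrite NvA andbT.
by apply: subset_trans AD _; rewrite setSD ?subsetT.
Qed.

Lemma D1_card_gt (T : finType) (e : rel T) (nabla : int) (v : T) (A : {set T}) :
  v \in D1 e nabla -> v \notin A -> Nopen e v \subset NclosedS e A ->
  (2 * nabla - 1 < #|A|%:Z)%R.
Proof.
rewrite inE => /forallP/(_ A)/implyP D1v vA NvA; apply: D1v; rewrite NvA andbT.
by apply/subsetP => x xA; rewrite !inE andbT; apply: contraNneq vA => <-.
Qed.

Lemma card_indep_D1_le (T : finType) (e : rel T) (D I : {set T}) (nabla : int) :
  symmetric e -> dominating e D -> nabla1B_lt e nabla%:~R ->
  I \subset D1 e nabla :\: D -> {in I &, forall x y, ~~ e x y} -> #|I| <= #|D|.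
Proof.
move=> e_sym domD lt_nabla sID indepI.
have [-> | [v0 v0I]] := set_0Vmem I; first by rewrite cards0.
have disjID : [disjoint I & D] by move: sID; rewrite subsetD => /andP[].
have := nabla1B_lt_gt0 v0 lt_nabla; rewrite ltr0z.
case: nabla lt_nabla sID => // N lt_nabla sID _.
pose F (i j : 'I_(#|I| + #|D|)) := cross e D I (vtx i) (vtx j).
have edges_lt : num_edges F < N * (#|I| + #|D|).
  have I_gt0 : 0 < #|I| by apply/card_gt0P; exists v0.
  have := lt_nabla _ _ _ _ (bip_1shallow_minor_cross e_sym domD disjID).
  rewrite ltr_pdivrMr ?ltr0n ?addn_gt0 ?I_gt0 // -pmulrn -natrM ltr_nat.
  by apply.
have deg_ge a : 2 * N <= #|[set b | F (lshift #|D| a) (rshift #|I| b)]|.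
  have /(subsetP sID) := enum_valP a; rewrite inE => /andP[vD vD1].
  have -> : [set b | F (lshift #|D| a) (rshift #|I| b)] =
            [set b | cross e D I (enum_val a) (enum_val b)].
    by apply/setP => b; rewrite !inE /F vtx_lshift vtx_rshift.
  rewrite card_set_enum_val.
  have := D1_card_gt vD1 _
    (Nopen_sub_NclosedS_cross domD disjID indepI (enum_valP a)).
  by rewrite inE (negPf vD) => /(_ isT); lia.
have := sum_card_lshift_rshift_le F.
have : \sum_(a < #|I|) 2 * N <=
       \sum_(a < #|I|) #|[set b | F (lshift #|D| a) (rshift #|I| b)]|.
  by apply: leq_sum => a _; exact: deg_ge.
rewrite sum_nat_const card_ord.
by move: (num_edges F) (\sum_(a < _) _) edges_lt => E s; nia.
Qed.

Section HallRatio.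

Variables (T : finType) (e : rel T).

Definition induced_edges (S : {set T}) : {set T * T} :=
  [set p | [&& p.1 \in S, p.2 \in S & e p.1 p.2]].

Lemma subgraph_induced_edges (S : {set T}) :
  subgraph_edges e S (induced_edges S).
Proof. by apply/forallP => p; apply/implyP; rewrite inE. Qed.

Lemma alpha_sub_gt0 (S : {set T}) (F : {set T * T}) :
  irreflexive e -> subgraph_edges e S F -> S != set0 -> 0 < alpha_sub S F.
Proof.
move=> e_irr /forallP SF /set0Pn[v vS]; rewrite -(cards1 v).
apply: leq_bigmax_cond; rewrite sub1set vS; apply/forall_inP => x /set1P ->.
apply/forall_inP => y /set1P ->; apply/negP => /[dup] /(implyP (SF _)).
by rewrite e_irr !andbF.
Qed.

Lemma alpha_induced_le (S : {set T}) (k : nat) :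
  (forall J : {set T},
     J \subset S -> {in J &, forall x y, ~~ e x y} -> #|J| <= k) ->
  alpha_sub S (induced_edges S) <= k.
Proof.
move=> le_k; apply/bigmax_leqP => J /andP[JS /forall_inP indepJ].
apply: le_k => // x y xJ yJ; move: (indepJ x xJ) => /forall_inP/(_ y yJ).
by rewrite inE (subsetP JS x xJ) (subsetP JS y yJ).
Qed.

Lemma hall_ratio_ge0 : (0 <= hall_ratio e)%R.
Proof.
apply: (big_ind (fun x : rat => 0 <= x)%R) => // [x y x0 _ | S _].
  by rewrite le_max x0.
apply: (big_ind (fun x : rat => 0 <= x)%R) => // [x y x0 _ | F _].
  by rewrite le_max x0.
by rewrite divr_ge0 ?ler0n.
Qed.

Lemma hall_ratio_ge (S : {set T}) (F : {set T * T}) :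
  S != set0 -> subgraph_edges e S F ->
  (#|S|%:R / (alpha_sub S F)%:R <= hall_ratio e)%R.
Proof.
move=> S0 SF; rewrite /hall_ratio (bigD1 S) //= le_max; apply/orP; left.
by rewrite (bigD1 F) //= le_max lexx.
Qed.

Lemma card_le_hall_ratio_alpha (S : {set T}) : irreflexive e ->
  (#|S|%:R <= hall_ratio e * (alpha_sub S (induced_edges S))%:R)%R.
Proof.
move=> e_irr; have [-> | S0] := eqVneq S set0.
  by rewrite cards0 mulr_ge0 ?hall_ratio_ge0.
have alpha_gt0 := alpha_sub_gt0 e_irr (subgraph_induced_edges S) S0.
rewrite -ler_pdivrMr ?ltr0n //; exact: hall_ratio_ge (subgraph_induced_edges S).
Qed.

End HallRatio.

Theorem lemma4 (T : finType) (e : rel T) (D : {set T}) (nabla : int) :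
  simple_graph e ->
  min_dominating e D ->
  nabla1B_lt e (nabla%:~R) ->
  D1 e nabla \subset Dhat e D nabla /\
  ((#|D1 e nabla :\: D|)%:R <= hall_ratio e * (#|D|)%:R :> rat)%R.
Proof.
move=> [e_sym e_irr] [domD _] lt_nabla; split; first exact: D1_sub_Dhat.
apply: le_trans (card_le_hall_ratio_alpha _ e_irr) _.
rewrite ler_wpM2l ?hall_ratio_ge0 // ler_nat.
apply: alpha_induced_le => J sJ indepJ.
exact: card_indep_D1_le e_sym domD lt_nabla (subset_trans sJ _) indepJ.
Qed.
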